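(* Let $\kappa\ge0$ and let $\lambda^w_a\in[\tfrac1{1+\kappa},1]$ for all $a\in\mathcal A$, $w\in\mathcal W$, and define the perceived path travel times $\tilde c^w_p(\mathbf f)=\sum_{a\in\mathcal A}\delta^p_a\lambda^w_a t_a(\mathbf v)$ for $p\in\mathcal P_w$. (i) If $\bar{\mathbf f}\in\mathbf F$ satisfies $\sum_{w\in\mathcal W}\sum_{p\in\mathcal P_w}\tilde c^w_p(\bar{\mathbf f})(f_p-\bar f_p)\ge0$ for all $\mathbf f\in\mathbf F$, then the OD-specific arc flow $\bar{\mathbf x}$ induced by $\bar{\mathbf f}$ satisfies $\sum_{a\in\mathcal A}\sum_{w\in\mathcal W}\lambda^w_a t_a(\bar{\mathbf v})(x^w_a-\bar x^w_a)\ge0$ for all $\mathbf x\in\mathbf X$. (ii) Conversely, if $\bar{\mathbf x}\in\mathbf X$ satisfies the latter inequality for all $\mathbf x\in\mathbf X$, then every $\bar{\mathbf f}\in\mathbf F$ inducing $\bar{\mathbf x}$ (i.e. $\bar x^w_a=\sum_{p\in\mathcal P_w}\delta^p_a\bar f_p$) satisfies the former inequality for all $\mathbf f\in\mathbf F$. Here $\bar{\mathbf v}$ denotes the arc flow with $\bar v_a=\sum_w\bar x^w_a$.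
   Context: Let $G=(\mathcal N,\mathcal A)$ be a finite directed graph and $\mathcal W$ a finite set of OD pairs; each $w$ has demand $Q_w>0$ and a finite set $\mathcal P_w$ of paths from its origin to its destination; $\mathcal P=\bigcup_w\mathcal P_w$; $\delta^p_a=1$ if arc $a$ lies on path $p$ and $0$ otherwise. Feasible path flows: $\mathbf F=\{\mathbf f\ge0:\sum_{p\in\mathcal P_w}f_p=Q_w\ \forall w\}$. A path flow induces arc flows $v_a=\sum_{p\in\mathcal P}\delta^p_af_p$ and OD-specific arc flows $x^w_a=\sum_{p\in\mathcal P_w}\delta^p_af_p$; $\mathbf X$ is the set of OD-specific arc flows induced by some $\mathbf f\in\mathbf F$. Each arc $a$ has a travel time function $t_a(\mathbf v)$ of the arc-flow vector. *)

From mathcomp Require Import all_boot all_order all_algebra.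
Set Implicit Arguments. Unset Strict Implicit. Unset Printing Implicit Defensive.
Import Order.TTheory GRing.Theory Num.Theory.
Local Open Scope ring_scope.

(* Each path p
   belongs to exactly one OD pair [od p], so P_w = [pred p | od p == w].
   [delta p a] is the arc-path incidence. *)
Section Traffic.
Variables (R : realFieldType) (A W P : finType).
Variable (od : P -> W) (delta : P -> A -> bool) (Q : W -> R).

Definition feasible (f : P -> R) : Prop :=
  (forall p, 0 <= f p) /\ (forall w, \sum_(p | od p == w) f p = Q w).

Definition odflow (f : P -> R) (w : W) (a : A) : R :=
  \sum_(p | od p == w) (delta p a)%:R * f p.

Definition arcflow (f : P -> R) (a : A) : R :=
  \sum_p (delta p a)%:R * f p.

Definition inX (x : W -> A -> R) : Prop :=
  exists f, feasible f /\ forall w a, x w a = odflow f w a.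

Definition ptime (lambda : W -> A -> R) (t : A -> (A -> R) -> R)
  (f : P -> R) (w : W) (p : P) : R :=
  \sum_a (delta p a)%:R * lambda w a * t a (arcflow f).

Definition pathVI lambda t (fbar : P -> R) : Prop :=
  forall f, feasible f ->
    0 <= \sum_w \sum_(p | od p == w) ptime lambda t fbar w p * (f p - fbar p).

Definition arcVI (lambda : W -> A -> R) (t : A -> (A -> R) -> R)
  (xbar : W -> A -> R) : Prop :=
  forall x, inX x ->
    0 <= \sum_a \sum_w lambda w a * t a (fun b => \sum_w' xbar w' b)
                        * (x w a - xbar w a).
End Traffic.

From mathcomp Require Import all_boot all_order all_algebra.
From Stdlib Require Import FunctionalExtensionality.
Import Order.TTheory GRing.Theory Num.Theory.
Local Open Scope ring_scope.

(* The perceived path cost is the sum of the OD-specific arc costs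
   lambda^w_a t_a(v) along the path, so exchanging the sums over paths and
   arcs turns the path-based variational gap at fbar against f into the
   arc-based gap at the induced flows.  Hence both inequalities are the same
   statement, and the path VI at fbar is equivalent to the arc VI at the
   OD-specific flow it induces. *)

Section PathArcGap.
Variables (R : realFieldType) (A W P : finType).
Variables (od : P -> W) (delta : P -> A -> bool) (Q : W -> R).

Lemma odflowB (f g : P -> R) w a :
  odflow od delta f w a - odflow od delta g w a =
  \sum_(p | od p == w) (delta p a)%:R * (f p - g p).
Proof. by rewrite /odflow -sumrB; apply: eq_bigr => p _; rewrite mulrBr. Qed.

Lemma sum_odflow (f : P -> R) :
  (fun b => \sum_w odflow od delta f w b) = arcflow delta f.
Proof.
by apply: functional_extensionality => b; rewrite /arcflow (partition_big od predT).
Qed.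

Lemma path_arc_pairingE (c : W -> A -> R) (f g : P -> R) :
  \sum_w \sum_(p | od p == w) (\sum_a (delta p a)%:R * c w a) * (f p - g p) =
  \sum_a \sum_w c w a * (odflow od delta f w a - odflow od delta g w a).
Proof.
rewrite [RHS]exchange_big /=; apply: eq_bigr => w _.
under [RHS]eq_bigr do rewrite odflowB mulr_sumr.
rewrite exchange_big /=; apply: eq_bigr => p _.
by rewrite mulr_suml; apply: eq_bigr => a _; rewrite mulrCA mulrA.
Qed.

Lemma path_gapE (lambda : W -> A -> R) (t : A -> (A -> R) -> R) (fbar f : P -> R) :
  \sum_w \sum_(p | od p == w) ptime delta lambda t fbar w p * (f p - fbar p) =
  \sum_a \sum_w lambda w a * t a (fun b => \sum_w' odflow od delta fbar w' b)
       * (odflow od delta f w a - odflow od delta fbar w a).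
Proof.
rewrite sum_odflow -path_arc_pairingE.
apply: eq_bigr => w _; apply: eq_bigr => p _.
by congr (_ * _); apply: eq_bigr => a _; rewrite mulrA.
Qed.

Lemma pathVI_arcVI (lambda : W -> A -> R) (t : A -> (A -> R) -> R) (fbar : P -> R) :
  pathVI od delta Q lambda t fbar <-> arcVI od delta Q lambda t (odflow od delta fbar).
Proof.
split.
- move=> VIf x [f [feas_f xE]].
  have -> : x = odflow od delta f.
    by do 2!apply: functional_extensionality => ?; apply: xE.
  by rewrite -path_gapE; apply: VIf.
- move=> VIx f feas_f; rewrite path_gapE; apply: VIx.
  by exists f.
Qed.

End PathArcGap.

Theorem lemma2 (R : realFieldType) (A W P : finType)
  (od : P -> W) (delta : P -> A -> bool) (Q : W -> R)
  (t : A -> (A -> R) -> R) (kappa : R) (lambda : W -> A -> R) :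
  (forall w, 0 < Q w) ->
  0 <= kappa ->
  (forall w a, (1 + kappa)^-1 <= lambda w a <= 1) ->
  (forall fbar : P -> R, feasible od Q fbar ->
     pathVI od delta Q lambda t fbar ->
     arcVI od delta Q lambda t (odflow od delta fbar))
  /\
  (forall xbar : W -> A -> R, inX od delta Q xbar ->
     arcVI od delta Q lambda t xbar ->
     forall fbar : P -> R, feasible od Q fbar ->
       (forall w a, xbar w a = odflow od delta fbar w a) ->
       pathVI od delta Q lambda t fbar).
Proof.
move=> _ _ _; split=> [fbar _ | xbar _ VIx fbar _ xbarE].
- by move/pathVI_arcVI.
- apply/pathVI_arcVI.
  suff <- : xbar = odflow od delta fbar by [].
  by do 2!apply: functional_extensionality => ?; apply: xbarE.
Qed.
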